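(* Let $m,\varepsilon>0$ and write $\widetilde{A}_k(x,t)=\widetilde{A}_k(x,t,m,\varepsilon)$. For each $k\in\{1,2\}$ and each $(x,t)\in\varepsilon\mathbb{Z}^2$, where $(x,t)\ne(0,0)$ if $k=1$ and $(x,t)\notin\{(-\varepsilon,0),(0,-\varepsilon)\}$ if $k=2$, $$\sqrt{1+m^2\varepsilon^2}\,\widetilde{A}_k(x,t+\varepsilon)+\sqrt{1+m^2\varepsilon^2}\,\widetilde{A}_k(x,t-\varepsilon)-\widetilde{A}_k(x+\varepsilon,t)-\widetilde{A}_k(x-\varepsilon,t)=0.$$
   Context: $\delta_{xy}$ is the Kronecker delta. For $\delta\in(0,1)$ let $A_k(x,t)=A_k(x,t,m,\varepsilon,\delta)$, $k\in\{1,2\}$, be the unique pair of complex-valued functions on $\{(x,t)\in\mathbb{R}^2:2x/\varepsilon,2t/\varepsilon,(x+t)/\varepsilon\in\mathbb{Z}\}$ satisfying: (1) for $2x/\varepsilon,2t/\varepsilon$ even, $A_1(x,t)=\frac{1}{\sqrt{1+m^2\varepsilon^2}}(A_1(x+\frac{\varepsilon}{2},t-\frac{\varepsilon}{2})+m\varepsilon A_2(x+\frac{\varepsilon}{2},t-\frac{\varepsilon}{2}))$ and $A_2(x,t)=\frac{1}{\sqrt{1+m^2\varepsilon^2}}(A_2(x-\frac{\varepsilon}{2},t-\frac{\varepsilon}{2})-m\varepsilon A_1(x-\frac{\varepsilon}{2},t-\frac{\varepsilon}{2}))+2\delta_{x0}\delta_{t0}$; (2) for $2x/\varepsilon,2t/\varepsilon$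 odd, $A_1(x,t)=\frac{1}{\sqrt{1-\delta^2}}(A_1(x+\frac{\varepsilon}{2},t-\frac{\varepsilon}{2})-i\delta A_2(x+\frac{\varepsilon}{2},t-\frac{\varepsilon}{2}))$ and $A_2(x,t)=\frac{1}{\sqrt{1-\delta^2}}(A_2(x-\frac{\varepsilon}{2},t-\frac{\varepsilon}{2})+i\delta A_1(x-\frac{\varepsilon}{2},t-\frac{\varepsilon}{2}))$; (3) $\sum_{(x,t)\in\varepsilon\mathbb{Z}^2}(|A_1|^2+|A_2|^2)<\infty$ (existence and uniqueness are known). $\widetilde{A}_k(x,t,m,\varepsilon):=\lim_{\delta\searrow0}A_k(x,t,m,\varepsilon,\delta)$ for $(x,t)\in\varepsilon\mathbb{Z}^2$ (known to exist). *)

From Stdlib Require Import Reals ZArith List.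
From Coquelicot Require Import Coquelicot.
Import ListNotations.

(* Lattice {(x,t) : 2x/eps, 2t/eps, (x+t)/eps in Z} is indexed by
   (a,b) in Z^2 with a+b even, via x = a*eps/2, t = b*eps/2.
   A function on the lattice is represented by f : Z -> Z -> C
   (values off the lattice are irrelevant and never used). *)
Definition on_lattice (p : Z * Z) : Prop := Z.Even (fst p + snd p).

Definition lattice_sq_summable (A1 A2 : Z -> Z -> C) : Prop :=
  exists B : R, forall l : list (Z * Z), NoDup l ->
    (forall p, In p l -> on_lattice p) ->
    fold_right (fun p acc => (Cmod (A1 (fst p) (snd p)))^2
                           + (Cmod (A2 (fst p) (snd p)))^2 + acc)%R 0%R l <= B.

(* The defining conditions (1), (2), (3) for A_k(.,.,m,eps,delta),
   written in half-step coordinates (a,b) = (2x/eps, 2t/eps). *)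
Definition is_A (m eps delta : R) (A1 A2 : Z -> Z -> C) : Prop :=
  (forall a b : Z, Z.Even a -> Z.Even b ->
     A1 a b = (RtoC (/ sqrt (1 + m^2 * eps^2)) *
               (A1 (a+1)%Z (b-1)%Z + RtoC (m * eps) * A2 (a+1)%Z (b-1)%Z))%C /\
     A2 a b = (RtoC (/ sqrt (1 + m^2 * eps^2)) *
               (A2 (a-1)%Z (b-1)%Z - RtoC (m * eps) * A1 (a-1)%Z (b-1)%Z)
               + (if (Z.eqb a 0 && Z.eqb b 0)%bool then RtoC 2 else RtoC 0))%C) /\
  (forall a b : Z, Z.Odd a -> Z.Odd b ->
     A1 a b = (RtoC (/ sqrt (1 - delta^2)) *
               (A1 (a+1)%Z (b-1)%Z - Ci * RtoC delta * A2 (a+1)%Z (b-1)%Z))%C /\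
     A2 a b = (RtoC (/ sqrt (1 - delta^2)) *
               (A2 (a-1)%Z (b-1)%Z + Ci * RtoC delta * A1 (a-1)%Z (b-1)%Z))%C) /\
  lattice_sq_summable A1 A2.

From Stdlib Require Import Reals ZArith Lra Lia.
From Coquelicot Require Import Coquelicot.

(** As δ → 0 the odd-site steps (2) tend to the identity, so the limits Ã₁, Ã₂
    satisfy on εZ² the two recursions obtained by composing one step (2) at
    δ = 0 with one step (1):
      S Ã₁(x,t) = Ã₁(x+ε,t−ε) + mε Ã₂(x,t−ε),
      S Ã₂(x,t) = Ã₂(x−ε,t−ε) − mε Ã₁(x,t−ε)      for (x,t) ≠ (0,0),
    where S = √(1+m²ε²).  Eliminating the other component between two
    neighbouring instances of these recursions and using S² = 1 + m²ε² gives
    the equation, at every point where no instance involves the source. *)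

Lemma Cmult_integral_l (s z : C) : s <> 0 -> (s * z = 0)%C -> z = 0.
Proof.
  intros Hs Hsz. replace z with (/ s * (s * z))%C by (field; exact Hs).
  rewrite Hsz. ring.
Qed.

Section DiscreteKleinGordon.

Variables (S M : C) (a1 a2 : Z -> Z -> C).
Hypothesis S_neq0 : S <> 0.
Hypothesis S_sq : (S * S = 1 + M * M)%C.
Hypothesis step1 : forall i j : Z,
  (S * a1 i j = a1 (i+1)%Z (j-1)%Z + M * a2 i (j-1)%Z)%C.
Hypothesis step2 : forall i j : Z, (i, j) <> (0%Z, 0%Z) ->
  (S * a2 i j = a2 (i-1)%Z (j-1)%Z - M * a1 i (j-1)%Z)%C.

(* In both lemmas, S times the left-hand side is a combination of three
   instances of the recursions and of S² − 1 − M². *)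
Lemma klein_gordon_a1 (i j : Z) : (i, j) <> (0%Z, 0%Z) ->
  (S * a1 i (j+1)%Z + S * a1 i (j-1)%Z - a1 (i+1)%Z j - a1 (i-1)%Z j)%C = RtoC 0.
Proof.
  intros Hij. apply (Cmult_integral_l S); [exact S_neq0|].
  pose proof (step1 i (j+1)) as e1. rewrite Z.add_simpl_r in e1.
  pose proof (step1 (i-1) j) as e2. rewrite Z.sub_add in e2.
  pose proof (step2 i j Hij) as e3.
  transitivity (S * (S * a1 i (j+1)%Z - (a1 (i+1)%Z j + M * a2 i j))
    + M * (S * a2 i j - (a2 (i-1)%Z (j-1)%Z - M * a1 i (j-1)%Z))
    - (S * a1 (i-1)%Z j - (a1 i (j-1)%Z + M * a2 (i-1)%Z (j-1)%Z))
    + (S * S - (1 + M * M)) * a1 i (j-1)%Z)%C; [ring|].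
  rewrite e1, e2, e3, S_sq. ring.
Qed.

Lemma klein_gordon_a2 (i j : Z) :
  (i, j) <> ((-1)%Z, 0%Z) -> (i, j) <> (0%Z, (-1)%Z) ->
  (S * a2 i (j+1)%Z + S * a2 i (j-1)%Z - a2 (i+1)%Z j - a2 (i-1)%Z j)%C = RtoC 0.
Proof.
  intros Hij1 Hij2. apply (Cmult_integral_l S); [exact S_neq0|].
  assert (e1 : (S * a2 i (j+1)%Z = a2 (i-1)%Z j - M * a1 i j)%C).
  { rewrite step2, Z.add_simpl_r; [reflexivity|].
    intros [= -> Hj]. apply Hij2. f_equal. lia. }
  assert (e2 : (S * a2 (i+1)%Z j = a2 i (j-1)%Z - M * a1 (i+1)%Z (j-1)%Z)%C).
  { rewrite step2, Z.add_simpl_r; [reflexivity|].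
    intros [= Hi ->]. apply Hij1. f_equal. lia. }
  transitivity (S * (S * a2 i (j+1)%Z - (a2 (i-1)%Z j - M * a1 i j))
    - (S * a2 (i+1)%Z j - (a2 i (j-1)%Z - M * a1 (i+1)%Z (j-1)%Z))
    - M * (S * a1 i j - (a1 (i+1)%Z (j-1)%Z + M * a2 i (j-1)%Z))
    + (S * S - (1 + M * M)) * a2 i (j-1)%Z)%C; [ring|].
  rewrite e1, e2, step1, S_sq. ring.
Qed.

End DiscreteKleinGordon.

Section ComplexLimits.

Context {T : Type} {F : (T -> Prop) -> Prop} {FF : Filter F}.

Lemma filterlim_Cplus (f g : T -> C) (x y : C) :
  filterlim f F (locally x) -> filterlim g F (locally y) ->
  filterlim (fun t => f t + g t)%C F (locally (x + y)%C).
Proof.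
  intros Hf Hg. apply (filterlim_comp_2 f g Cplus Hf Hg).
  apply (@filterlim_plus C_AbsRing C_NormedModule).
Qed.

Lemma filterlim_Cminus (f g : T -> C) (x y : C) :
  filterlim f F (locally x) -> filterlim g F (locally y) ->
  filterlim (fun t => f t - g t)%C F (locally (x - y)%C).
Proof.
  intros Hf Hg. apply filterlim_Cplus; [exact Hf|].
  apply (filterlim_comp _ _ _ g Copp F _ _ Hg).
  apply (@filterlim_opp C_AbsRing C_NormedModule).
Qed.

Lemma filterlim_Cmult_l (k : C) (f : T -> C) (x : C) :
  filterlim f F (locally x) -> filterlim (fun t => k * f t)%C F (locally (k * x)%C).
Proof.
  intros Hf. apply (filterlim_comp _ _ _ f (Cmult k) F _ _ Hf).
  apply (@filterlim_scal_r C_AbsRing C_NormedModule).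
Qed.

Lemma filterlim_RtoC_mult (h : T -> R) (f : T -> C) (a : R) (x : C) :
  filterlim h F (locally a) -> filterlim f F (locally x) ->
  filterlim (fun t => RtoC (h t) * f t)%C F (locally (RtoC a * x)%C).
Proof.
  intros Hh Hf.
  apply filterlim_ext with (fun t => scal (V := C_R_NormedModule) (h t) (f t)).
  { intros t. apply scal_R_Cmult. }
  rewrite <- scal_R_Cmult.
  apply (filterlim_comp_2 (H := locally (x : C_R_NormedModule)) h f
           (fun r z => scal (V := C_R_NormedModule) r z) Hh Hf).
  apply (@filterlim_scal R_AbsRing C_R_NormedModule).
Qed.

End ComplexLimits.

Lemma filterlim_odd_step (f g : R -> C) (x y : C) :
  filterlim f (at_right 0) (locally x) -> filterlim g (at_right 0) (locally y) ->
  filterlim (fun d => RtoC (/ sqrt (1 - d^2)) * (f d + RtoC d * g d))%C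
    (at_right 0) (locally x).
Proof.
  intros Hf Hg.
  assert (lim_id : filterlim (fun d => d) (at_right 0) (locally 0)).
  { exact (filterlim_filter_le_1 _ (filter_le_within _) (filterlim_id _ _)). }
  assert (lim_norm : filterlim (fun d => / sqrt (1 - d^2)) (at_right 0) (locally 1)).
  { assert (Hc : continuous (fun d => / sqrt (1 - d^2)) 0).
    { apply (ex_derive_continuous (K := R_AbsRing) (V := R_NormedModule)). auto_derive.
      replace (1 + - (0 * (0 * 1))) with 1 by ring. rewrite sqrt_1. repeat split; lra. }
    pose proof (filterlim_filter_le_1 (G := at_right 0) _ (filter_le_within _) Hc) as H.
    cbv beta in H. rewrite pow_i, Rminus_0_r, sqrt_1, Rinv_1 in H by lia. exact H. }
  replace x with (RtoC 1 * (x + RtoC 0 * y))%C by ring.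
  apply filterlim_RtoC_mult; [exact lim_norm|].
  apply filterlim_Cplus; [exact Hf|].
  apply filterlim_RtoC_mult; [exact lim_id | exact Hg].
Qed.

Lemma source_off_origin (i j : Z) : (i, j) <> (0%Z, 0%Z) ->
  ((2*i =? 0)%Z && (2*j =? 0)%Z)%bool = false.
Proof.
  intros Hij. destruct (Z.eqb_spec (2*i) 0), (Z.eqb_spec (2*j) 0); try reflexivity.
  exfalso. apply Hij. f_equal; lia.
Qed.

Lemma sqrt_mass_pos (m eps : R) : 0 < sqrt (1 + m^2 * eps^2).
Proof. apply sqrt_lt_R0. nra. Qed.

Lemma RtoC_mult_eq_inv (r : R) (z w : C) :
  r <> 0 -> z = (RtoC (/ r) * w)%C -> (RtoC r * z = w)%C.
Proof.
  intros Hr ->. rewrite Cmult_assoc, <- RtoC_mult, Rinv_r by exact Hr. ring.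
Qed.

Section LimitRecursion.

Variables (m eps : R) (A1 A2 : R -> Z -> Z -> C) (At1 At2 : Z -> Z -> C).
Hypothesis HA : forall d : R, 0 < d < 1 -> is_A m eps d (A1 d) (A2 d).
Hypothesis lim1 : forall i j : Z,
  filterlim (fun d => A1 d (2*i)%Z (2*j)%Z) (at_right 0) (locally (At1 i j)).
Hypothesis lim2 : forall i j : Z,
  filterlim (fun d => A2 d (2*i)%Z (2*j)%Z) (at_right 0) (locally (At2 i j)).

Lemma is_A_eventually : at_right 0 (fun d => is_A m eps d (A1 d) (A2 d)).
Proof.
  exists (mkposreal 1 Rlt_0_1). intros d Hd Hpos. apply HA.
  apply Rabs_def2 in Hd. unfold minus, plus, opp in Hd; simpl in Hd. lra.
Qed.

Lemma A1_odd_lim (i j : Z) :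
  filterlim (fun d => A1 d (2*i+1)%Z (2*j+1)%Z) (at_right 0) (locally (At1 (i+1)%Z j)).
Proof.
  apply filterlim_ext_loc with (fun d => RtoC (/ sqrt (1 - d^2)) *
    (A1 d (2*(i+1))%Z (2*j)%Z + RtoC d * (- Ci * A2 d (2*(i+1))%Z (2*j)%Z)))%C.
  - generalize is_A_eventually. apply filter_imp. intros d [_ [Hodd _]].
    destruct (Hodd (2*i+1)%Z (2*j+1)%Z) as [-> _]; [exists i; ring | exists j; ring |].
    replace (2*i+1+1)%Z with (2*(i+1))%Z by ring.
    replace (2*j+1-1)%Z with (2*j)%Z by ring. ring.
  - apply filterlim_odd_step with (- Ci * At2 (i+1)%Z j)%C; [apply lim1|].
    apply filterlim_Cmult_l, lim2.
Qed.

Lemma A2_odd_lim (i j : Z) :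
  filterlim (fun d => A2 d (2*i+1)%Z (2*j+1)%Z) (at_right 0) (locally (At2 i j)).
Proof.
  apply filterlim_ext_loc with (fun d => RtoC (/ sqrt (1 - d^2)) *
    (A2 d (2*i)%Z (2*j)%Z + RtoC d * (Ci * A1 d (2*i)%Z (2*j)%Z)))%C.
  - generalize is_A_eventually. apply filter_imp. intros d [_ [Hodd _]].
    destruct (Hodd (2*i+1)%Z (2*j+1)%Z) as [_ ->]; [exists i; ring | exists j; ring |].
    replace (2*i+1-1)%Z with (2*i)%Z by ring.
    replace (2*j+1-1)%Z with (2*j)%Z by ring. ring.
  - apply filterlim_odd_step with (Ci * At1 i j)%C; [apply lim2|].
    apply filterlim_Cmult_l, lim1.
Qed.

Lemma At1_step (i j : Z) :
  (RtoC (sqrt (1 + m^2 * eps^2)) * At1 i j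
   = At1 (i+1)%Z (j-1)%Z + RtoC (m * eps) * At2 i (j-1)%Z)%C.
Proof.
  apply RtoC_mult_eq_inv; [apply Rgt_not_eq, sqrt_mass_pos|].
  apply (filterlim_locally_unique (V := C_NormedModule) (F := at_right 0)
           (fun d => A1 d (2*i)%Z (2*j)%Z)); [apply lim1|].
  apply filterlim_ext_loc with (fun d => RtoC (/ sqrt (1 + m^2 * eps^2)) *
    (A1 d (2*i+1)%Z (2*(j-1)+1)%Z + RtoC (m * eps) * A2 d (2*i+1)%Z (2*(j-1)+1)%Z))%C.
  - generalize is_A_eventually. apply filter_imp. intros d [Heven _].
    destruct (Heven (2*i)%Z (2*j)%Z) as [-> _]; [exists i; ring | exists j; ring |].
    replace (2*(j-1)+1)%Z with (2*j-1)%Z by ring. reflexivity.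
  - apply filterlim_Cmult_l.
    apply filterlim_Cplus; [apply A1_odd_lim|].
    apply filterlim_Cmult_l, A2_odd_lim.
Qed.

Lemma At2_step (i j : Z) : (i, j) <> (0%Z, 0%Z) ->
  (RtoC (sqrt (1 + m^2 * eps^2)) * At2 i j
   = At2 (i-1)%Z (j-1)%Z - RtoC (m * eps) * At1 i (j-1)%Z)%C.
Proof.
  intros Hij. apply RtoC_mult_eq_inv; [apply Rgt_not_eq, sqrt_mass_pos|].
  apply (filterlim_locally_unique (V := C_NormedModule) (F := at_right 0)
           (fun d => A2 d (2*i)%Z (2*j)%Z)); [apply lim2|].
  apply filterlim_ext_loc with (fun d => RtoC (/ sqrt (1 + m^2 * eps^2)) *
    (A2 d (2*(i-1)+1)%Z (2*(j-1)+1)%Z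
     - RtoC (m * eps) * A1 d (2*(i-1)+1)%Z (2*(j-1)+1)%Z))%C.
  - generalize is_A_eventually. apply filter_imp. intros d [Heven _].
    destruct (Heven (2*i)%Z (2*j)%Z) as [_ ->]; [exists i; ring | exists j; ring |].
    rewrite source_off_origin by exact Hij.
    replace (2*(i-1)+1)%Z with (2*i-1)%Z by ring.
    replace (2*(j-1)+1)%Z with (2*j-1)%Z by ring. ring.
  - apply filterlim_Cmult_l.
    apply filterlim_Cminus; [apply A2_odd_lim|].
    apply filterlim_Cmult_l.
    pose proof (A1_odd_lim (i-1) (j-1)) as H. rewrite Z.sub_add in H. exact H.
Qed.

End LimitRecursion.

Theorem proposition5 (m eps : R) (hm : 0 < m) (heps : 0 < eps)
  (A1 A2 : R -> Z -> Z -> C) (At1 At2 : Z -> Z -> C) :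
  (forall d : R, 0 < d < 1 -> is_A m eps d (A1 d) (A2 d)) ->
  (forall i j : Z,
     filterlim (fun d => A1 d (2*i)%Z (2*j)%Z) (at_right 0) (locally (At1 i j))) ->
  (forall i j : Z,
     filterlim (fun d => A2 d (2*i)%Z (2*j)%Z) (at_right 0) (locally (At2 i j))) ->
  (forall i j : Z, (i, j) <> (0%Z, 0%Z) ->
     (RtoC (sqrt (1 + m^2 * eps^2)) * At1 i (j+1)%Z
      + RtoC (sqrt (1 + m^2 * eps^2)) * At1 i (j-1)%Z
      - At1 (i+1)%Z j - At1 (i-1)%Z j)%C = RtoC 0) /\
  (forall i j : Z, (i, j) <> ((-1)%Z, 0%Z) -> (i, j) <> (0%Z, (-1)%Z) ->
     (RtoC (sqrt (1 + m^2 * eps^2)) * At2 i (j+1)%Z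
      + RtoC (sqrt (1 + m^2 * eps^2)) * At2 i (j-1)%Z
      - At2 (i+1)%Z j - At2 (i-1)%Z j)%C = RtoC 0).
Proof.
  intros HA lim1 lim2.
  pose proof (sqrt_mass_pos m eps) as Hpos.
  assert (S_neq0 : RtoC (sqrt (1 + m^2 * eps^2)) <> 0).
  { intros H. apply (f_equal fst) in H. change (sqrt (1 + m^2 * eps^2) = 0) in H. lra. }
  assert (S_sq : (RtoC (sqrt (1 + m^2 * eps^2)) * RtoC (sqrt (1 + m^2 * eps^2))
                  = 1 + RtoC (m * eps) * RtoC (m * eps))%C).
  { rewrite <- !RtoC_mult, <- RtoC_plus, sqrt_sqrt by nra. f_equal. ring. }
  pose proof (At1_step m eps A1 A2 At1 At2 HA lim1 lim2) as step1.
  pose proof (At2_step m eps A1 A2 At1 At2 HA lim1 lim2) as step2.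
  split.
  - exact (klein_gordon_a1 _ _ _ _ S_neq0 S_sq step1 step2).
  - exact (klein_gordon_a2 _ _ _ _ S_neq0 S_sq step1 step2).
Qed.
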